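(* Let $k\geq 1$ and let $T$ be a binary phylogenetic $X$-tree with $|X| = 2k$. If $\mathcal{P}=\{P_1,\ldots,P_k\}$ and $\mathcal{Q}=\{Q_1,\ldots,Q_k\}$ are both sets of $k$ pairwise edge-disjoint leaf-to-leaf paths in $T$, then $\mathcal{P}=\mathcal{Q}$; i.e., $T$ has exactly one set of $k$ pairwise edge-disjoint leaf-to-leaf paths.
   Context: A phylogenetic $X$-tree is a tree with no vertices of degree 2 whose leaves are bijectively labelled by (and identified with) $X$; binary means maximum degree 3. A leaf-to-leaf path is a path whose two endpoints are (distinct) leaves; paths are considered unordered (a path and its reverse are the same). *)

(* Finite simple graphs as symmetric irreflexive relations. *)
From mathcomp Require Import all_boot.
Set Implicit Arguments. Unset Strict Implicit. Unset Printing Implicit Defensive.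

Section Trees.
Variable V : finType.
Variable e : rel V.

Definition degree (v : V) : nat := #|[set w | e v w]|.

Definition is_leaf (v : V) : bool := degree v == 1.
Definition leaves : {set V} := [set v | is_leaf v].

Definition has_cycle : Prop :=
  exists (x : V) (p : seq V),
    [/\ path e x p, uniq (x :: p), 2 <= size p & e (last x p) x].

Definition is_tree : Prop :=
  [/\ symmetric e, irreflexive e, (forall x y, connect e x y) & ~ has_cycle].

(* binary phylogenetic tree (leaf set X = leaves): a tree with no vertex of
   degree 2 and maximum degree at most 3 *)
Definition binary_phylo_tree : Prop :=
  [/\ is_tree, (forall v, degree v != 2) & (forall v, degree v <= 3)].

(* the edge set traversed by the vertex sequence x :: p;
   an edge {a,b} is represented by the 2-element set [set a; b] *)
Definition path_edges (x : V) (p : seq V) : {set {set V}} :=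
  [set [set z.1; z.2] | z in zip (x :: p) p].

(* an (unordered) leaf-to-leaf path, represented by its edge set: some
   simple path x :: p between two distinct leaves traverses exactly S.
   A path and its reverse give the same edge set. *)
Definition leaf_to_leaf_path (S : {set {set V}}) : Prop :=
  exists (x : V) (p : seq V),
    [/\ path e x p, uniq (x :: p), is_leaf x && is_leaf (last x p),
        x != last x p & S = path_edges x p].

Definition edge_disjoint_path_system (k : nat) (P : {set {set {set V}}}) : Prop :=
  [/\ #|P| = k,
      {in P, forall S, leaf_to_leaf_path S} &
      ({in P &, forall S1 S2 : {set {set V}}, S1 != S2 -> [disjoint S1 & S2]})].

End Trees.

From mathcomp Require Import all_boot zify.
Set Implicit Arguments. Unset Strict Implicit. Unset Printing Implicit Defensive.

(* A leaf-to-leaf path meets an inner vertex in 0 or 2 edges, and its two ends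
   are leaves; since k paths have 2k ends and each of the 2k leaves has degree 1,
   the union of the edges of a system of k edge-disjoint paths has odd degree
   exactly at the leaves.  So the unions of two such systems differ by an edge
   set of even degree everywhere, which in a forest is empty.  Moreover, as the
   maximum degree is 3, two paths of one system never share a vertex (they would
   need 4 edges at an inner vertex, 2 at a leaf): each path is a connected
   component of the common union, so the two systems coincide. *)

Section PathEdges.
Variables (V : finType) (e : rel V).
Implicit Types (x y v : V) (p : seq V) (D : {set {set V}}).

Definition incident D v := [set E in D | v \in E].

Definition edge_set D : Prop :=
  forall E, E \in D -> exists a b, e a b /\ E = [set a; b].

Lemma card_incident D v : #|incident D v| = \sum_(E in D) (v \in E).
Proof.
rewrite -sum1_card big_mkcond [RHS]big_mkcond; apply: eq_bigr => E _.
by rewrite !inE; case: (E \in D); case: (v \in E).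
Qed.

Lemma path_edges_nil x : path_edges x [::] = set0.
Proof. by apply/setP => E; rewrite inE; apply/imsetP => -[z]. Qed.

Lemma path_edges_cons x y p :
  path_edges x (y :: p) = [set x; y] |: path_edges y p.
Proof.
apply/setP => E; rewrite !inE; apply/imsetP/idP => [[z] | ].
  rewrite /= inE => /orP [/eqP -> -> | zi ->]; rewrite ?eqxx //.
  by apply/orP; right; apply: imset_f.
case/orP=> [/eqP ->|/imsetP [z zi ->]].
  by exists (x, y); rewrite //= inE eqxx.
by exists z; rewrite //= inE zi orbT.
Qed.

Lemma edge_set_path_edges x p : path e x p -> edge_set (path_edges x p).
Proof.
elim: p x => [|y p IH] x; first by rewrite path_edges_nil => _ E; rewrite inE.
rewrite path_edges_cons /= => /andP [exy /IH pE] E; rewrite !inE.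
by case/orP=> [/eqP ->|]; [exists x, y | apply: pE].
Qed.

Lemma mem_path_edges x p E v :
  E \in path_edges x p -> v \in E -> v \in x :: p.
Proof.
elim: p x => [|y p IH] x; first by rewrite path_edges_nil inE.
rewrite path_edges_cons in_setU1 => /orP [/eqP -> /set2P [] -> | /IH H /H];
  by rewrite !inE ?eqxx ?orbT // => ->; rewrite orbT.
Qed.

Lemma card_incident_path_edges x p v : uniq (x :: p) ->
  #|incident (path_edges x p) v| = (v \in belast x p) + (v \in p).
Proof.
rewrite card_incident; elim: p x => [|y p IH] x.
  by rewrite path_edges_nil big_set0.
move=> /andP [xNyp Uyp]; rewrite path_edges_cons big_setU1 /= ?IH //; last first.
  by apply: contra xNyp => /mem_path_edges; apply; rewrite set21.
move: xNyp; rewrite !inE => /norP [xNy xNp].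
case/andP: Uyp => yNp _.
have xNb : x \notin belast y p.
  by apply: contra xNp => /mem_belast; rewrite inE (negbTE xNy).
case: (v =P x) => [->|_]; first by rewrite (negbTE xNb) (negbTE xNy) (negbTE xNp).
case: (v =P y) => [->|_] /=; last by [].
by rewrite (negbTE yNp); lia.
Qed.

End PathEdges.

Lemma path_edges_sub_closed (V : finType) (S U : {set {set V}}) (x : V) p :
  (forall v E1 E, E1 \in S -> v \in E1 -> E \in U -> v \in E -> E \in S) ->
  path_edges x p \subset U -> (exists2 E, E \in S & x \in E) ->
  path_edges x p \subset S.
Proof.
move=> S_closed; elim: p x => [|y p IH] x.
  by rewrite path_edges_nil => _ _; apply: sub0set.
rewrite path_edges_cons !subUset !sub1set => /andP [xyU pU] [E ES xE].
have xyS : [set x; y] \in S by apply: S_closed ES xE xyU (set21 x y).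
by rewrite xyS IH //; exists [set x; y]; rewrite ?set22.
Qed.

Lemma odd_card_symdiff (T : finType) (A B : {set T}) :
  odd #|(A :\: B) :|: (B :\: A)| = odd #|A| (+) odd #|B|.
Proof.
have disj : (A :\: B) :&: (B :\: A) = set0.
  by apply/setP => x; rewrite !inE; case: (x \in A); rewrite ?andbF.
rewrite cardsU disj cards0 subn0 -(cardsID B A) -(cardsID A B) setIC !oddD.
by case: (odd _); case: (odd _); case: (odd _).
Qed.

Lemma eq_set2 (T : finType) (a b c d : T) :
  [set a; b] = [set c; d] -> (a = c /\ b = d) \/ (a = d /\ b = c).
Proof.
move=> abcd.
have: a \in [set c; d] by rewrite -abcd set21.
have: b \in [set c; d] by rewrite -abcd set22.
have: c \in [set a; b] by rewrite abcd set21.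
have: d \in [set a; b] by rewrite abcd set22.
by (do 4 case/set2P=> ?); subst; auto.
Qed.

Section Cycles.
Variables (V : finType) (e : rel V).

Lemma has_cycle_chord x p v w :
  path e x (rcons p v) -> uniq (x :: rcons p v) ->
  w \in x :: p -> w != last x p -> e v w -> has_cycle e.
Proof.
move=> pP Up wp; move: pP Up; case/splitPl: wp => p1 p2 <-.
rewrite rcons_cat cat_path -cat_cons cat_uniq.
case/andP=> _ p2P /and3P [_ wNp2 Up2] wNl evw.
exists (last x p1), (rcons p2 v); split => //.
- rewrite /= Up2 andbT; apply: contra wNp2 => wp2.
  by apply/hasP; exists (last x p1); rewrite // mem_last.
- by case: p2 wNl {p2P wNp2 Up2} => [|? ?]; rewrite ?cats0 ?eqxx //= size_rcons.
- by rewrite last_rcons.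
Qed.

End Cycles.

Section EvenEdgeSets.
Variables (V : finType) (e : rel V) (D : {set {set V}}).
Hypotheses (e_sym : symmetric e) (e_irr : irreflexive e) (e_acyclic : ~ has_cycle e).
Hypotheses (D_edges : edge_set e D) (D_even : forall v, ~~ odd #|incident D v|).

Let eD a b := [set a; b] \in D.

Let eD_sub : subrel eD e.
Proof.
move=> a b /D_edges [c [d [ecd /eq_set2 [] [-> ->] //]]].
by rewrite e_sym.
Qed.

Let eD_other u v : eD u v -> exists2 w, eD v w & w != u.
Proof.
move=> euv; have uvI : [set u; v] \in incident D v by rewrite inE set22 andbT.
have : 1 < #|incident D v|.
  have := D_even v; have : 0 < #|incident D v| by apply/card_gt0P; exists [set u; v].
  by case: #|incident D v| => [|[|n]].
rewrite (cardsD1 [set u; v]) uvI ltnS => /card_gt0P [E].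
rewrite !inE => /and3P [EN ED vE].
have [a [b [_ Eab]]] := D_edges ED; move: vE EN ED; rewrite Eab.
case/set2P=> <- EN ED.
  by exists b => //; apply: contraNneq EN => ->; rewrite setUC.
by exists a; [rewrite /eD setUC | apply: contraNneq EN => ->].
Qed.

Let eD_path_rcons x p : p != [::] -> path eD x p -> uniq (x :: p) ->
  exists w, path eD x (rcons p w) /\ uniq (x :: rcons p w).
Proof.
case/lastP: p => [//|p v] _ pP Up.
have [w evw wNl] : exists2 w, eD v w & w != last x p.
  by apply: eD_other; move: pP; rewrite rcons_path => /andP [].
exists w; split; first by rewrite rcons_path pP last_rcons.
rewrite -rcons_cons rcons_uniq Up andbT -rcons_cons mem_rcons inE negb_or.
apply/andP; split.
  by apply: contraTneq (eD_sub evw) => ->; rewrite e_irr.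
apply/negP => wp; apply: e_acyclic.
exact: (has_cycle_chord (sub_path eD_sub pP) Up wp wNl (eD_sub evw)).
Qed.

Lemma even_edge_set0 : D = set0.
Proof.
apply/eqP/set0Pn => -[E ED]; have [a [b [eab Eab]]] := D_edges ED.
have long n : exists x p, [/\ size p = n.+1, path eD x p & uniq (x :: p)].
  elim: n => [|n [x [p [sp pP Up]]]].
    exists a, [:: b]; rewrite /= /eD -Eab ED inE !andbT; split=> //.
    by apply: contraTneq eab => ->; rewrite e_irr.
  have [|w [pwP Upw]] := eD_path_rcons _ pP Up; first by rewrite -size_eq0 sp.
  by exists x, (rcons p w); rewrite size_rcons sp.
have [x [p [sp _ /card_uniqP Up]]] := long #|V|.
by have := max_card (mem (x :: p)); rewrite Up /= sp => /ltnW; rewrite ltnn.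
Qed.

End EvenEdgeSets.

Section LeafPaths.
Variables (V : finType) (e : rel V).
Implicit Types (v : V) (D S : {set {set V}}).

Lemma card_incident_le_degree D v :
  symmetric e -> edge_set e D -> #|incident D v| <= degree e v.
Proof.
move=> e_sym De; apply: leq_trans (leq_imset_card (fun w => [set v; w]) _).
apply/subset_leq_card/subsetP => E; rewrite !inE => /andP [ED vE].
have [a [b [eab Eab]]] := De E ED; rewrite Eab in vE *.
case/set2P: vE => ->; apply/imsetP; [exists b | exists a; rewrite 1?setUC] => //;
  by rewrite inE // e_sym.
Qed.

Lemma leaf_to_leaf_path_edge_set S : leaf_to_leaf_path e S -> edge_set e S.
Proof. by case=> x [p [pP _ _ _ ->]]; apply: edge_set_path_edges. Qed.

Lemma leaf_to_leaf_path_neq0 S : leaf_to_leaf_path e S -> S != set0.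
Proof.
case=> x [[|y p] [_ _ _ xNl ->]]; first by rewrite eqxx in xNl.
by apply/set0Pn; exists [set x; y]; rewrite path_edges_cons setU11.
Qed.

Lemma card_incident_leaf_to_leaf_path S v : leaf_to_leaf_path e S ->
  ~~ is_leaf e v -> #|incident S v| = 0 \/ #|incident S v| = 2.
Proof.
case=> x [p [_ Up /andP [xL lL] _ ->]] vNL; rewrite card_incident_path_edges //.
have vNx : v != x by apply: contraNneq vNL => ->.
have vNl : v != last x p by apply: contraNneq vNL => ->.
have vb : (v \in belast x p) = (v \in x :: p).
  by rewrite lastI mem_rcons inE (negbTE vNl).
by rewrite vb inE (negbTE vNx); case: (v \in p); [right | left].
Qed.

Lemma leaf_to_leaf_path_leaves S : leaf_to_leaf_path e S ->
  2 <= \sum_(l in leaves e) #|incident S l|.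
Proof.
case=> x [[|y p] [_ Up /andP [xL lL] xNl ->]]; first by rewrite eqxx in xNl.
rewrite (bigD1 x) ?inE //= (bigD1 (last x (y :: p))) ?inE ?lL 1?eq_sym //=.
rewrite !card_incident_path_edges //= !inE eqxx.
by have := mem_last y p; rewrite inE => ->; lia.
Qed.

End LeafPaths.

Section PathSystems.
Variables (V : finType) (e : rel V) (k : nat).
Hypothesis e_sym : symmetric e.
Implicit Types (v : V) (S : {set {set V}}) (P Q : {set {set {set V}}}).

Lemma card_incident_cover P v : trivIset P ->
  #|incident (cover P) v| = \sum_(S in P) #|incident S v|.
Proof.
move=> Ptriv; rewrite card_incident big_trivIset //.
by apply: eq_bigr => S _; rewrite card_incident.
Qed.

Section System.
Variable P : {set {set {set V}}}.
Hypothesis P_sys : edge_disjoint_path_system e k P.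

Let P_triv : trivIset P.
Proof. by case: P_sys => _ _ /trivIsetP. Qed.

Let P_paths : {in P, forall S, leaf_to_leaf_path e S}.
Proof. by case: P_sys. Qed.

Lemma edge_set_cover : edge_set e (cover P).
Proof. by move=> E /bigcupP [S /P_paths /leaf_to_leaf_path_edge_set]; apply. Qed.

Lemma card_incident_cover_leaf l : #|leaves e| = 2 * k ->
  l \in leaves e -> #|incident (cover P) l| = 1.
Proof.
move=> leaves_card.
have le1 l' : l' \in leaves e -> #|incident (cover P) l'| <= 1.
  rewrite inE => /eqP <-; exact: card_incident_le_degree e_sym edge_set_cover.
have : #|leaves e| <= \sum_(l in leaves e) #|incident (cover P) l|.
  under eq_bigr => l' _ do rewrite card_incident_cover //.
  rewrite exchange_big leaves_card /=; case: P_sys => <- _ _.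
  rewrite mulnC -sum_nat_const; apply: leq_sum => S /P_paths.
  exact: leaf_to_leaf_path_leaves.
move=> cover_leaves Ll; apply/eqP.
have [sum_le1 /esym] := leqif_sum (fun l' Ll' => leqif_eq (le1 l' Ll')).
by rewrite eqn_leq sum_le1 sum1_card cover_leaves => /forall_inP; apply.
Qed.

Lemma odd_card_incident_cover v : #|leaves e| = 2 * k ->
  odd #|incident (cover P) v| = is_leaf e v.
Proof.
move=> leaves_card.
case vL: (is_leaf e v); first by rewrite card_incident_cover_leaf ?inE.
apply/negbTE; rewrite card_incident_cover // -dvdn2; apply: dvdn_sum => S /P_paths.
by move/card_incident_leaf_to_leaf_path => /(_ v (negbT vL)) [] ->.
Qed.

Lemma path_system_closed S v E1 E : (forall v, degree e v <= 3) ->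
  S \in P -> E1 \in S -> v \in E1 -> E \in cover P -> v \in E -> E \in S.
Proof.
move=> deg3 SP E1S vE1 /bigcupP [S' S'P ES'] vE.
have [//|ENS] := boolP (E \in S); exfalso.
have S'NS : S' != S by apply: contraNneq ENS => <-.
have S_v : 0 < #|incident S v| by apply/card_gt0P; exists E1; rewrite inE E1S.
have S'_v : 0 < #|incident S' v| by apply/card_gt0P; exists E; rewrite inE ES'.
have sum_le : #|incident S v| + #|incident S' v| <= degree e v.
  apply: leq_trans (card_incident_le_degree v e_sym edge_set_cover).
  rewrite card_incident_cover // (bigD1 S) //= (bigD1 S') /=; last by rewrite S'P.
  by rewrite addnA leq_addr.
case vL: (is_leaf e v); first by move: sum_le; rewrite (eqP vL); lia.
have := card_incident_leaf_to_leaf_path (P_paths SP) (negbT vL).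
have := card_incident_leaf_to_leaf_path (P_paths S'P) (negbT vL).
by have := deg3 v; lia.
Qed.

End System.

Lemma cover_path_system_eq P Q :
  irreflexive e -> ~ has_cycle e -> #|leaves e| = 2 * k ->
  edge_disjoint_path_system e k P -> edge_disjoint_path_system e k Q ->
  cover P = cover Q.
Proof.
move=> e_irr e_acyclic leaves_card Psys Qsys.
set D := (cover P :\: cover Q) :|: (cover Q :\: cover P).
suff /eqP : D = set0.
  by rewrite setU_eq0 !setD_eq0 => PQ; apply/eqP; rewrite eqEsubset.
apply: (even_edge_set0 e_sym e_irr e_acyclic).
  move=> E; rewrite !inE => /orP [] /andP [_] E_cover.
    by apply: (edge_set_cover Psys E_cover).
  by apply: (edge_set_cover Qsys E_cover).
move=> v; have -> : incident D v =
    (incident (cover P) v :\: incident (cover Q) v) :|: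
    (incident (cover Q) v :\: incident (cover P) v).
  apply/setP => E; rewrite /D !inE.
  by case: (v \in E); case: (E \in cover P); case: (E \in cover Q).
by rewrite odd_card_symdiff !odd_card_incident_cover // addbb.
Qed.

Lemma path_system_refines P Q S : (forall v, degree e v <= 3) ->
  edge_disjoint_path_system e k P -> edge_disjoint_path_system e k Q ->
  cover P = cover Q -> S \in P -> exists2 S', S' \in Q & S \subset S'.
Proof.
move=> deg3 [_ Ppaths _] Qsys PQ SP.
have [x [[|y p] [_ _ _ xNl Sdef]]] := Ppaths S SP; first by rewrite eqxx in xNl.
have xyS : [set x; y] \in S by rewrite Sdef path_edges_cons setU11.
have /bigcupP [S' S'Q xyS'] : [set x; y] \in cover Q.
  by rewrite -PQ; apply/bigcupP; exists S.
exists S' => //; rewrite Sdef; apply: (path_edges_sub_closed (U := cover Q)).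
- by move=> v E1 E; apply: path_system_closed.
- by rewrite -Sdef -PQ bigcup_sup.
- by exists [set x; y]; rewrite ?set21.
Qed.

Lemma path_system_sub P Q : (forall v, degree e v <= 3) ->
  edge_disjoint_path_system e k P -> edge_disjoint_path_system e k Q ->
  cover P = cover Q -> P \subset Q.
Proof.
move=> deg3 Psys Qsys PQ; apply/subsetP => S SP.
have [S' S'Q SS'] := path_system_refines deg3 Psys Qsys PQ SP.
have [S'' S''P S'S''] := path_system_refines deg3 Qsys Psys (esym PQ) S'Q.
have SS'' : S = S''.
  case: Psys => _ Ppaths Pdisj; apply/eqP; apply: contraT => /(Pdisj _ _ SP S''P).
  rewrite -setI_eq0 (setIidPl (subset_trans SS' S'S'')).
  by rewrite (negbTE (leaf_to_leaf_path_neq0 (Ppaths S SP))).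
suff -> : S = S' by [].
by apply/eqP; rewrite eqEsubset SS' SS''.
Qed.

End PathSystems.

Theorem lemma7 (V : finType) (e : rel V) (k : nat) :
  1 <= k ->
  binary_phylo_tree e ->
  #|leaves e| = 2 * k ->
  forall P Q : {set {set {set V}}},
    edge_disjoint_path_system e k P ->
    edge_disjoint_path_system e k Q ->
    P = Q.
Proof.
move=> _ [[e_sym e_irr _ e_acyclic] _ deg3] leaves_card P Q Psys Qsys.
have PQ := cover_path_system_eq e_sym e_irr e_acyclic leaves_card Psys Qsys.
have [[Pk _ _] [Qk _ _]] := (Psys, Qsys).
apply/eqP; rewrite eqEcard Pk Qk leqnn andbT.
exact: (path_system_sub e_sym deg3 Psys Qsys PQ).
Qed.
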